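(* Let $e\geqslant 1$ and $b\geqslant 2$ be integers. Suppose that $e\not\equiv 1\pmod{p-1}$ for every prime divisor $p$ of $b-1$. Then for every positive integer $m$ there exists an integer $l>0$ such that $l+1,l+2,\ldots,l+m$ are all $(e,b)$-happy.
   Context: For integers $e\geqslant 1$, $b\geqslant 2$ and a positive integer $n=\sum_{j=0}^k a_j b^j$ with $0\leqslant a_j<b$, define $T_{e,b}(n)=\sum_{j=0}^k a_j^e$ (the sum of the $e$-th powers of the base-$b$ digits of $n$). $T_{e,b}^r$ denotes the $r$-th iterate of $T_{e,b}$, with $T_{e,b}^0(n)=n$. A positive integer $n$ is called $(e,b)$-happy if $T_{e,b}^r(n)=1$ for some $r\geqslant 0$. *)

From mathcomp Require Import all_boot.
Set Implicit Arguments. Unset Strict Implicit. Unset Printing Implicit Defensive.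

(* Sum of e-th powers of base-b digits, with fuel. For b >= 2, fuel n
   suffices since each step strictly decreases the number. *)
Fixpoint digit_pow_sum_aux (fuel e b n : nat) : nat :=
  match fuel with
  | 0 => 0
  | fuel'.+1 =>
      if n == 0 then 0
      else (n %% b) ^ e + digit_pow_sum_aux fuel' e b (n %/ b)
  end.

Definition T (e b n : nat) : nat := digit_pow_sum_aux n e b n.

Definition happy (e b n : nat) : Prop :=
  0 < n /\ exists r : nat, iter r (T e b) n = 1.

From mathcomp Require Import all_boot ssralg zmodp finalg fingroup cyclic zify.
Set Implicit Arguments. Unset Strict Implicit. Unset Printing Implicit Defensive.

(* T is additive under concatenation of base-b digit strings, so prefixing x ones
   to L + s turns T (L + s) into x + T (L + s).  Hence a finite set S has a
   translate made of happy numbers as soon as its image under some composite of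
   the maps n |-> T (L + n) has one, e.g. when that image is a single point c
   (translate by b ^ c - c).  It remains to merge any two numbers a < a + d by such
   maps.  Choosing L + a = a * b ^ t + v replaces the gap d by the gap between
   T (v + d) and T v; a gap (b - 1) q closes at once (v = q).  The hypothesis on e
   means that the numbers w ^ e - w, w < b, have no common prime factor p with
   b - 1: otherwise w ^ e = w mod p for all w, and cyclicity of (Z/p)^* gives
   e = 1 mod p - 1.  Incrementing all digits of blocks 0, 1, ..., w - 1 thus
   reduces every gap repunit N + b ^ N * Z, where N = (b - 1) b ^ 2 leaves room
   for the blocks, to a multiple of b - 1, and every gap d
   is first reduced to one of that shape through v = b ^ (d + k) - d, whose T
   grows with slope (b - 1) ^ e, a unit modulo b ^ N. *)

Definition undigits (b : nat) (ds : seq nat) : nat := foldr (fun d n => d + b * n) 0 ds.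

Definition repunit (b k : nat) : nat := undigits b (nseq k 1).

Lemma undigits_map_succ b ds :
  undigits b (map S ds) = undigits b ds + repunit b (size ds).
Proof.
elim: ds => [|d ds IH] //=.
by rewrite /repunit /= -/(repunit b (size ds)) IH mulnDr; lia.
Qed.

Lemma undigits_nseq_pred b k : 0 < b -> undigits b (nseq k b.-1) = b ^ k - 1.
Proof.
move=> b_gt0; elim: k => [|k IH] //=; rewrite IH expnS mulnBr muln1.
have : b <= b * b ^ k by rewrite leq_pmulr ?expn_gt0 ?b_gt0.
by lia.
Qed.

Lemma undigits_lt b ds : all (fun d => d < b) ds -> undigits b ds < b ^ size ds.
Proof.
elim: ds => [|d ds IH] //= /andP [d_lt /IH ds_lt].
apply: (@leq_trans (b * (undigits b ds).+1)); first by rewrite mulnS ltn_add2r.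
by rewrite expnS leq_mul2l ds_lt orbT.
Qed.

Lemma biggcdn_dvd_idx (f : nat -> nat) M l : \big[gcdn/M]_(w <- l) f w %| M.
Proof.
elim: l => [|w l IH]; rewrite ?big_nil ?big_cons //.
exact: dvdn_trans (dvdn_gcdr _ _) IH.
Qed.

Lemma biggcdn_dvd_term (f : nat -> nat) M l w :
  w \in l -> \big[gcdn/M]_(y <- l) f y %| f w.
Proof. by move=> wl; rewrite (big_rem_AC _ _ _ _ wl) dvdn_gcdl. Qed.

Lemma biggcdn_Bezout_sumn (f : nat -> nat) M l t : 0 < M ->
  \big[gcdn/M]_(w <- l) f w %| t ->
  exists ws, [/\ size ws <= M * size l, {subset ws <= l} & M %| sumn (map f ws) + t].
Proof.
move=> M_gt0; elim: l t => [|c l IH] t; first by rewrite big_nil; exists [::].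
rewrite big_cons gcdnC; set g := \big[gcdn/M]_(w <- l) f w => /dvdnP [k def_t].
have g_gt0 : 0 < g := dvdn_gt0 M_gt0 (biggcdn_dvd_idx f M l).
have [a _ g_dvd_a] := Bezoutl (f c) g_gt0.
pose x := (k * a) %% g.
have g_dvd_x : g %| t + x * f c.
  have : g %| t + k * a * f c by rewrite def_t -mulnA -mulnDr dvdn_mull.
  rewrite {1}(divn_eq (k * a) g) mulnDl addnCA dvdn_addr //.
  by rewrite -mulnA mulnCA dvdn_mulr.
have [ws [size_ws ws_l M_dvd]] := IH _ g_dvd_x.
exists (nseq x c ++ ws); split.
- rewrite size_cat size_nseq mulnS leq_add //.
  exact: leq_trans (ltnW (ltn_pmod _ g_gt0)) (dvdn_leq M_gt0 (biggcdn_dvd_idx f M l)).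
- move=> y; rewrite mem_cat => /orP [/nseqP [-> _]|/ws_l y_l]; first exact: mem_head.
  by rewrite inE y_l orbT.
- rewrite map_cat sumn_cat map_nseq sumn_nseq -addnA [_ + t]addnC addnA mulnC.
  by rewrite addnC [x * _ + t]addnC.
Qed.

(* A generator of the cyclic group (Z/p)^* of order p - 1 is fixed by x |-> x ^ e. *)
Lemma expn_id_mod_prime p e : prime p -> 0 < e ->
  (forall w, w < p -> w ^ e = w %[mod p]) -> e = 1 %[mod p.-1].
Proof.
move=> p_pr e_gt0 expn_id.
have p_gt1 := prime_gt1 p_pr.
have expZp_id (x : 'Z_p) : (x ^+ e)%R = x.
  apply: val_inj => /=; have x_lt : (x : nat) < p by rewrite -[p in _ < p]Zp_cast.
  by rewrite -[x in (x ^+ e)%R]natr_Zp -GRing.natrX val_Zp_nat // expn_id // modn_small.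
have [g gen_g] := cyclicP (units_Zp_cyclic p_pr).
have order_g : #[g]%g = p.-1.
  by rewrite /order -gen_g card_units_Zp ?prime_gt0 // totient_prime.
have : (g ^+ e.-1 == 1)%g.
  apply/eqP; apply: (mulIg g); rewrite mul1g -expgSr prednK //.
  by apply: val_inj; rewrite FinRing.val_unitX expZp_id.
by rewrite -order_dvdn order_g => dvd_e; apply/eqP; rewrite eqn_mod_dvd // subn1.
Qed.

Lemma coprime_affine_solve a m r c : 0 < a -> 0 < m -> coprime a m ->
  exists k z, a * k + c = r + m * z.
Proof.
move=> a_gt0 m_gt0 co_am; have [ka km def_ka _] := egcdnP m a_gt0.
rewrite (eqP co_am) in def_ka.
pose y := r + m.-1 * c; exists (ka * y), (km * y + c).
rewrite mulnA [a * ka]mulnC def_ka mulnDl mul1n mulnDr mulnA [m * km]mulnC.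
by rewrite -{3}(prednK m_gt0) mulSn /y; lia.
Qed.

Lemma sumn_le_size_mul (s : seq nat) m : all (fun x => x <= m) s -> sumn s <= size s * m.
Proof. by elim: s => [|x s IH] //= /andP [x_le /IH s_le]; rewrite mulSn leq_add. Qed.

Section DigitPowerSum.

Variables e b : nat.
Hypotheses (e_gt0 : 0 < e) (b_gt1 : 1 < b).

Let b_gt0 : 0 < b := ltnW b_gt1.

Lemma digit_pow_sum_aux_fuel f1 f2 n : n <= f1 -> n <= f2 ->
  digit_pow_sum_aux f1 e b n = digit_pow_sum_aux f2 e b n.
Proof.
elim: f1 f2 n => [|f1 IH] [|f2] n //=; rewrite ?leqn0.
- by move=> /eqP ->; case: f2.
- by move=> _ /eqP ->.
case: eqP => // /eqP n_neq0 n_le1 n_le2; congr (_ + _).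
have n_div_lt : n %/ b < n by rewrite ltn_Pdiv // lt0n.
by apply: IH; rewrite -ltnS (leq_trans n_div_lt).
Qed.

Lemma T_unfold n : T e b n = if n == 0 then 0 else (n %% b) ^ e + T e b (n %/ b).
Proof.
case: n => [|n] //; rewrite /T /=; congr (_ + _).
by apply: digit_pow_sum_aux_fuel; rewrite // -ltnS ltn_Pdiv.
Qed.

Lemma T_digit_cons r h : r < b -> T e b (r + b * h) = r ^ e + T e b h.
Proof.
move=> r_lt; rewrite T_unfold addn_eq0 muln_eq0 (negbTE (lt0n_neq0 b_gt0)) /=.
rewrite [r + _]addnC [b * h]mulnC modnMDl modn_small // divnMDl // divn_small // addn0.
by case: ifP => // /andP [/eqP -> /eqP ->]; rewrite exp0n.
Qed.

Lemma T_cat s h r : r < b ^ s -> T e b (h * b ^ s + r) = T e b h + T e b r.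
Proof.
elim: s h r => [|s IH] h r.
  by rewrite expn0 ltnS leqn0 => /eqP ->; rewrite muln1 !addn0.
move=> r_lt; have rq_lt : r %/ b < b ^ s by rewrite ltn_divLR // -expnSr.
rewrite (divn_eq r b) [_ * b + _]addnC [r %/ b * b]mulnC T_digit_cons ?ltn_mod //.
rewrite [RHS]addnCA -IH // -T_digit_cons ?ltn_mod //; congr (T e b _).
by rewrite mulnDr expnS mulnCA addnCA.
Qed.

Lemma T_undigits ds : all (fun d => d < b) ds ->
  T e b (undigits b ds) = sumn [seq d ^ e | d <- ds].
Proof.
by elim: ds => [|d ds IH] //= /andP [d_lt /IH <-]; rewrite T_digit_cons.
Qed.

Lemma T_repunit k : T e b (repunit b k) = k.
Proof.
rewrite T_undigits; last by apply/allP => _ /nseqP [-> _].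
by rewrite map_nseq exp1n sumn_nseq mul1n.
Qed.

Lemma T_expn k : T e b (b ^ k) = 1.
Proof.
rewrite -[b ^ k]addn0 -[b ^ k]mul1n T_cat ?expn_gt0 ?b_gt0 //.
by have := T_digit_cons (r := 1) 0 b_gt1; rewrite muln0 addn0 exp1n => ->.
Qed.

Lemma T_expn_pred k : T e b (b ^ k - 1) = b.-1 ^ e * k.
Proof.
rewrite -undigits_nseq_pred // T_undigits ?map_nseq ?sumn_nseq //.
by apply/allP => _ /nseqP [-> _]; rewrite prednK.
Qed.

Lemma T_expn_sub d k : 0 < d ->
  T e b (b ^ (d + k) - d) = b.-1 ^ e * k + T e b (b ^ d - d).
Proof.
move=> d_gt0; have d_lt := ltn_expl d b_gt1.
have -> : b ^ (d + k) - d = (b ^ k - 1) * b ^ d + (b ^ d - d).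
  have : b ^ d <= b ^ (d + k) by rewrite leq_pexp2l // leq_addr.
  by rewrite mulnBl mul1n -expnD addnC; lia.
by rewrite T_cat ?T_expn_pred // ltn_subrL d_gt0 expn_gt0 b_gt0.
Qed.

Definition T_shifts (Ls : seq nat) (n : nat) : nat :=
  foldl (fun n L => T e b (L + n)) n Ls.

Definition happy_translate (S : seq nat) : Prop :=
  exists2 x, 0 < x & {in S, forall s, happy e b (x + s)}.

Definition mergeable (d : nat) : Prop :=
  forall a, exists Ls, T_shifts Ls a = T_shifts Ls (a + d).

Lemma T_shifts_cons L Ls n : T_shifts (L :: Ls) n = T_shifts Ls (T e b (L + n)).
Proof. by []. Qed.

Lemma T_shifts_cat Ls1 Ls2 n : T_shifts (Ls1 ++ Ls2) n = T_shifts Ls2 (T_shifts Ls1 n).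
Proof. exact: foldl_cat. Qed.

Lemma happy_translate_T_shift L S :
  happy_translate [seq T e b (L + s) | s <- S] -> happy_translate S.
Proof.
case=> x x_gt0 happy_x; set t := L + \max_(s <- S) s.
have rep_gt0 : 0 < repunit b x.
  by rewrite lt0n; apply: contraTneq x_gt0 => rep0; rewrite -(T_repunit x) rep0.
have pref_gt0 : 0 < repunit b x * b ^ t by rewrite muln_gt0 rep_gt0 expn_gt0 b_gt0.
exists (repunit b x * b ^ t + L) => [|s sS]; first exact: ltn_addr.
have [_ [r iter_r]] := happy_x _ (map_f _ sS).
have Ls_lt : L + s < b ^ t.
  by apply: leq_ltn_trans (ltn_expl _ b_gt1); rewrite leq_add2l leq_bigmax_seq.
split; first by rewrite -addnA ltn_addr.
by exists r.+1; rewrite iterSr -addnA T_cat // T_repunit.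
Qed.

Lemma happy_translate_T_shifts Ls S :
  happy_translate (map (T_shifts Ls) S) -> happy_translate S.
Proof.
elim: Ls S => [|L Ls IH] S; first by rewrite map_id.
by move=> happyS; apply: (happy_translate_T_shift (L := L)); apply: IH; rewrite -map_comp.
Qed.

Lemma happy_translate_const c S : {in S, forall s, s = c} -> happy_translate S.
Proof.
move=> S_c; have c_lt := ltn_expl c b_gt1.
exists (b ^ c - c) => [|s /S_c ->]; first by rewrite subn_gt0.
rewrite subnK ?(ltnW c_lt) //; split; first by rewrite expn_gt0 b_gt0.
by exists 1; rewrite /= T_expn.
Qed.

Lemma T_shifts_collapse : (forall d, mergeable d) ->
  forall S : seq nat, exists Ls c, {in S, forall s, T_shifts Ls s = c}.
Proof.
move=> merge; elim=> [|s S [Ls [c merged]]]; first by exists [::], 0.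
pose a := T_shifts Ls s.
have [Ls' eq_ac] : exists Ls', T_shifts Ls' a = T_shifts Ls' c.
  case: (leqP a c) => [a_le|c_lt].
    by have [Ls' eqLs'] := merge (c - a) a; exists Ls'; rewrite eqLs' subnKC.
  by have [Ls' eqLs'] := merge (a - c) c; exists Ls'; rewrite eqLs' subnKC // ltnW.
exists (Ls ++ Ls'), (T_shifts Ls' c) => x; rewrite inE T_shifts_cat.
by case/predU1P => [->|/merged ->].
Qed.

Lemma mergeable0 : mergeable 0.
Proof. by move=> a; exists [::]; rewrite addn0. Qed.

(* With L + a = a * b ^ t + v, the pair (a, a + d) is sent to a pair differing by delta. *)
Lemma mergeable_transfer v d delta :
  T e b (v + d) = T e b v + delta \/ T e b v = T e b (v + d) + delta ->
  mergeable delta -> mergeable d.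
Proof.
move=> T_gap merge_delta a; set t := v + d; set L := a * b ^ t + v - a.
have t_lt : t < b ^ t := ltn_expl t b_gt1.
have a_le : a <= a * b ^ t + v.
  by apply: leq_trans (leq_addr v _); rewrite leq_pmulr // expn_gt0 b_gt0.
have TLa : T e b (L + a) = T e b a + T e b v.
  by rewrite subnK // T_cat // (leq_ltn_trans (leq_addr d v)).
have TLad : T e b (L + (a + d)) = T e b a + T e b (v + d).
  by rewrite addnA subnK // -addnA T_cat.
case: T_gap => T_gap.
  have [Ls eqLs] := merge_delta (T e b a + T e b v).
  by exists (L :: Ls); rewrite !T_shifts_cons TLa TLad T_gap addnA.
have [Ls eqLs] := merge_delta (T e b a + T e b (v + d)).
by exists (L :: Ls); rewrite !T_shifts_cons TLa TLad T_gap addnA.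
Qed.

Lemma mergeable_mul_pred q : mergeable (b.-1 * q).
Proof.
apply: (@mergeable_transfer q _ 0); last exact: mergeable0.
have -> : q + b.-1 * q = q * b ^ 1 + 0.
  by rewrite addn0 expn1 mulnC -{1}[q]muln1 -mulnDr add1n prednK.
by left; rewrite T_cat ?expn1.
Qed.

Lemma mergeable_modn_pred v d : T e b (v + d) = T e b v %[mod b.-1] -> mergeable d.
Proof.
move=> eq_mod; case: (leqP (T e b v) (T e b (v + d))) => [le_v|lt_v].
  have /dvdnP [q def_q] : b.-1 %| T e b (v + d) - T e b v by rewrite -eqn_mod_dvd ?eq_mod.
  apply: (@mergeable_transfer v _ (T e b (v + d) - T e b v)).
    by left; rewrite subnKC.
  by rewrite def_q mulnC; apply: mergeable_mul_pred.
have /dvdnP [q def_q] : b.-1 %| T e b v - T e b (v + d).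
  by rewrite -eqn_mod_dvd ?eq_mod // ltnW.
apply: (@mergeable_transfer v _ (T e b v - T e b (v + d))).
  by right; rewrite subnKC // ltnW.
by rewrite def_q mulnC; apply: mergeable_mul_pred.
Qed.

Lemma leq_self_expn w : w <= w ^ e.
Proof. by case: w => // w; rewrite -{1}[w.+1]expn1 leq_pexp2l. Qed.

Lemma sumn_iota_succ_expn w :
  sumn [seq y.+1 ^ e | y <- iota 0 w] = sumn [seq y ^ e | y <- iota 0 w] + w ^ e.
Proof.
elim: w => [|w IH]; first by rewrite exp0n.
by rewrite -addn1 iotaD !map_cat !sumn_cat IH /= !addn0 addn1 addnAC.
Qed.

Lemma sumn_blocks_succ_expn ws :
  sumn [seq y.+1 ^ e | y <- flatten (map (iota 0) ws)] =
  sumn [seq y ^ e | y <- flatten (map (iota 0) ws)] + sumn [seq w ^ e | w <- ws].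
Proof.
elim: ws => [|w ws IH] //=.
by rewrite !map_cat !sumn_cat IH sumn_iota_succ_expn addnACA.
Qed.

Hypothesis e_cond : forall p, prime p -> p %| b.-1 -> e != 1 %[mod p.-1].

Lemma biggcdn_expn_sub_eq1 : \big[gcdn/b.-1]_(w <- iota 0 b) (w ^ e - w) = 1.
Proof.
set g := \big[gcdn/_]_(_ <- _) _.
have b1_gt0 : 0 < b.-1 by rewrite ltn_predRL.
have g_dvd : g %| b.-1 := biggcdn_dvd_idx _ _ _.
have g_gt0 : 0 < g := dvdn_gt0 b1_gt0 g_dvd.
apply/eqP; rewrite eqn_leq g_gt0 andbT leqNgt; apply/negP => g_gt1.
have p_dvd_b1 := dvdn_trans (pdiv_dvd g) g_dvd.
have /negP[] := e_cond (pdiv_prime g_gt1) p_dvd_b1.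
apply/eqP/expn_id_mod_prime => [||w w_lt]; rewrite ?pdiv_prime //.
apply/eqP; rewrite eqn_mod_dvd ?leq_self_expn //; apply: dvdn_trans (pdiv_dvd g) _.
apply: biggcdn_dvd_term; rewrite mem_iota /=.
by apply: leq_trans w_lt (leq_trans (dvdn_leq b1_gt0 p_dvd_b1) (leq_pred b)).
Qed.

Let N := b.-1 * b * b.

(* Incrementing the digits of a block 0, 1, ..., w - 1 raises their power sum by w ^ e,
   and a zero digit by 1; padding blocks of total length sumn ws with zeros to length N
   gives a gain of N + sumn (w ^ e - w), which ws makes congruent to - t. *)
Lemma exists_digits_succ_cong t : exists ys : seq nat,
  [/\ size ys = N, all (fun y => y.+1 < b) ys &
      t + sumn [seq y.+1 ^ e | y <- ys] = sumn [seq y ^ e | y <- ys] %[mod b.-1]].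
Proof.
have b1_gt0 : 0 < b.-1 by rewrite ltn_predRL.
have gcd_dvd : \big[gcdn/b.-1]_(w <- iota 0 b) (w ^ e - w) %| t + N.
  by rewrite biggcdn_expn_sub_eq1 dvd1n.
have [ws [size_ws ws_b b1_dvd]] := biggcdn_Bezout_sumn b1_gt0 gcd_dvd.
have ws_lt : all (fun w => w < b) ws by apply/allP => w /ws_b; rewrite mem_iota.
have sum_ws : sumn ws <= N.
  apply: leq_trans (sumn_le_size_mul (m := b) _) _; first by apply: sub_all ws_lt => w /ltnW.
  by rewrite size_iota in size_ws; rewrite /N leq_mul2r size_ws orbT.
have sum_expn_ws : sumn [seq w ^ e | w <- ws] = sumn [seq w ^ e - w | w <- ws] + sumn ws.
  by elim: (ws) => //= w ws' ->; rewrite addnACA subnK ?leq_self_expn.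
exists (flatten (map (iota 0) ws) ++ nseq (N - sumn ws) 0); split.
- rewrite size_cat size_nseq size_flatten /shape -map_comp (eq_map (size_iota 0)) map_id.
  exact: subnKC.
- rewrite all_cat; apply/andP; split; last by apply/allP => _ /nseqP [-> _].
  apply/allP => y /flatten_mapP [w w_ws]; rewrite mem_iota => /andP [_ y_lt].
  exact: leq_ltn_trans y_lt (allP ws_lt w w_ws).
rewrite !map_cat !sumn_cat sumn_blocks_succ_expn sum_expn_ws !map_nseq !sumn_nseq.
rewrite exp1n exp0n // mul1n mul0n addn0.
case/dvdnP: b1_dvd => k def_k; move: def_k sum_ws.
set Sd := sumn [seq _ - _ | _ <- _]; set Sy := sumn [seq y ^ e | y <- _] => def_k sum_ws.
have -> : t + (Sy + (Sd + sumn ws) + (N - sumn ws)) = Sd + (t + N) + Sy by lia.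
by rewrite def_k modnMDl.
Qed.

Lemma mergeable_repunit_add Z : mergeable (repunit b N + b ^ N * Z).
Proof.
have [ys [size_ys ys_lt cong_ys]] := exists_digits_succ_cong (T e b Z).
have ys_lt' : all (fun y => y < b) ys by apply: sub_all ys_lt => y /ltnW.
have ysS_lt : all (fun y => y < b) (map S ys) by rewrite all_map.
apply: (@mergeable_modn_pred (undigits b ys)).
rewrite addnA -size_ys -undigits_map_succ addnC mulnC -(size_map S).
by rewrite T_cat ?undigits_lt // !T_undigits // -map_comp; exact: cong_ys.
Qed.

(* b ^ (d + k) - d consists of k digits b - 1 above the d digits of b ^ d - d,
   and b.-1 ^ e is invertible modulo b ^ N. *)
Lemma mergeable_all d : mergeable d.
Proof.
have [->|d_gt0] := posnP d; first exact: mergeable0.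
have [k [Z def_k]] : exists k Z,
    b.-1 ^ e * k + T e b (b ^ d - d) = 1 + repunit b N + b ^ N * Z.
  apply: coprime_affine_solve; rewrite ?expn_gt0 ?ltn_predRL ?b_gt1 ?b_gt0 //.
  by apply: coprimeXl; apply: coprimeXr; apply: coprimePn.
apply: (@mergeable_transfer (b ^ (d + k) - d)); last exact: mergeable_repunit_add.
have d_le : d <= b ^ (d + k).
  by rewrite (leq_trans (ltnW (ltn_expl d b_gt1))) // leq_pexp2l // leq_addr.
by right; rewrite subnK // T_expn T_expn_sub // def_k addnA.
Qed.

End DigitPowerSum.

Theorem theorem1p1 (e b : nat) (he : 1 <= e) (hb : 2 <= b)
  (hcond : forall p : nat, prime p -> p %| b.-1 -> e != 1 %[mod p.-1]) :
  forall m : nat, 0 < m ->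
    exists l : nat, 0 < l /\ forall i : nat, 1 <= i <= m -> happy e b (l + i).
Proof.
move=> m _.
have [Ls [c merged]] := T_shifts_collapse (mergeable_all he hb hcond) (iota 1 m).
have [l l_gt0 happy_l] : happy_translate e b (iota 1 m).
  apply: (happy_translate_T_shifts he hb (Ls := Ls)).
  by apply: (happy_translate_const he hb (c := c)) => _ /mapP [s /merged -> ->].
exists l; split => // i /andP [i_ge1 i_le]; apply: happy_l.
by rewrite mem_iota i_ge1 add1n ltnS.
Qed.
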